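(* Let $M$ be a free $\mathbb{Z}$-module of rank $2$ with basis $\{a_1, b_1\}$ and skew-symmetric pairing with $\langle a_1, b_1 \rangle = -1$. Let $c_1, c_2, c_3 \in M$ with $c_1 \equiv a_1 + b_1$, $c_2 \equiv b_1$ and $c_3 \equiv a_1 \pmod{2M}$, and let $n \geq 1$. Then the closed subgroup of $\mathrm{Sp}(M \otimes \mathbb{Z}_2)$ topologically generated by $T_{c_1}^{2^n}, T_{c_2}^{2^n}, T_{c_3}^{2^n}$ coincides with $\Gamma(2^{n})$.
   Context: For $c \in M$, $T_c$ is the transvection $v \mapsto v + \langle v, c\rangle c$ on $M\otimes\mathbb{Z}_2$. $\Gamma(N) = \{\sigma \in \mathrm{Sp}(M\otimes\mathbb{Z}_2) : \sigma \equiv 1 \pmod N\}$. *)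

From HB Require Import structures.
From mathcomp Require Import all_boot all_order all_algebra.
From mathcomp Require Import boolp.
Set Implicit Arguments. Unset Strict Implicit. Unset Printing Implicit Defensive.
Import Order.TTheory GRing.Theory Num.Theory.
Local Open Scope ring_scope.

(* The ring Z_2 of 2-adic integers, as the inverse limit of Z/2^k Z:         *)
(* a 2-adic integer is a sequence (x_k)_k of integers with 0 <= x_k < 2^k    *)
(* and x_{k+1} = x_k mod 2^k (x_k is the residue of x modulo 2^k).           *)

Definition pow2 (k : nat) : int := (2 ^+ k)%R.

Definition Z2 := {x : nat -> int | forall k, (x k.+1 %% pow2 k)%Z = x k}.

Definition z2seq (x : Z2) : nat -> int := proj1_sig x.

HB.instance Definition _ := gen_eqMixin Z2.
HB.instance Definition _ := gen_choiceMixin Z2.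

Lemma z2_eq (x y : Z2) : (forall k, z2seq x k = z2seq y k) -> x = y.
Proof.
case: x => x Hx; case: y => y Hy /= E.
have exy : x = y by apply: funext.
subst y; congr exist; exact: Prop_irrelevance.
Qed.

Lemma modz_pow2S (m : int) k : ((m %% pow2 k.+1)%Z %% pow2 k)%Z = (m %% pow2 k)%Z.
Proof.
rewrite {2}(divz_eq m (pow2 k.+1)) /pow2 exprS mulrA.
by rewrite modzMDl.
Qed.

Lemma z2_reduce_compat (f : nat -> int)
  (Hf : forall k, (f k.+1 = f k %[mod pow2 k])%Z) :
  forall k, ((f k.+1 %% pow2 k.+1)%Z %% pow2 k)%Z = (f k %% pow2 k)%Z.
Proof. by move=> k; rewrite modz_pow2S Hf. Qed.

Definition z2_of (f : nat -> int)
  (Hf : forall k, (f k.+1 = f k %[mod pow2 k])%Z) : Z2 :=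
  exist _ (fun k => (f k %% pow2 k)%Z) (z2_reduce_compat Hf).

Lemma z2seq_of f Hf k : z2seq (@z2_of f Hf) k = (f k %% pow2 k)%Z.
Proof. by []. Qed.

Lemma z2_compat (x : Z2) k : (z2seq x k.+1 %% pow2 k)%Z = z2seq x k.
Proof. exact: (proj2_sig x). Qed.

Lemma z2_modE (x : Z2) k : (z2seq x k %% pow2 k)%Z = z2seq x k.
Proof. by rewrite -z2_compat modz_mod. Qed.

Fact z2_zero_compat k : ((0 : int) = 0 %[mod pow2 k])%Z.
Proof. by []. Qed.
Definition z2_zero : Z2 := z2_of z2_zero_compat.

Fact z2_one_compat k : ((1 : int) = 1 %[mod pow2 k])%Z.
Proof. by []. Qed.
Definition z2_one : Z2 := z2_of z2_one_compat.

Fact z2_add_compat (x y : Z2) k :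
  (z2seq x k.+1 + z2seq y k.+1 = z2seq x k + z2seq y k %[mod pow2 k])%Z.
Proof. by rewrite -(z2_compat x k) -(z2_compat y k) modzDm. Qed.
Definition z2_add (x y : Z2) : Z2 := z2_of (z2_add_compat x y).

Fact z2_opp_compat (x : Z2) k :
  (- z2seq x k.+1 = - z2seq x k %[mod pow2 k])%Z.
Proof. by rewrite -(z2_compat x k) modzNm. Qed.
Definition z2_opp (x : Z2) : Z2 := z2_of (z2_opp_compat x).

Fact z2_mul_compat (x y : Z2) k :
  (z2seq x k.+1 * z2seq y k.+1 = z2seq x k * z2seq y k %[mod pow2 k])%Z.
Proof. by rewrite -(z2_compat x k) -(z2_compat y k) modzMm. Qed.
Definition z2_mul (x y : Z2) : Z2 := z2_of (z2_mul_compat x y).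

Fact z2_addA : associative z2_add.
Proof.
move=> x y z; apply: z2_eq => k; rewrite !z2seq_of.
by rewrite modzDml modzDmr addrA.
Qed.

Fact z2_addC : commutative z2_add.
Proof. by move=> x y; apply: z2_eq => k; rewrite !z2seq_of addrC. Qed.

Fact z2_add0 : left_id z2_zero z2_add.
Proof.
by move=> x; apply: z2_eq => k; rewrite !z2seq_of mod0z add0r z2_modE.
Qed.

Fact z2_addN : left_inverse z2_zero z2_opp z2_add.
Proof.
move=> x; apply: z2_eq => k; rewrite !z2seq_of.
by rewrite modzDml addNr.
Qed.

HB.instance Definition _ := GRing.isZmodule.Build Z2 z2_addA z2_addC z2_add0 z2_addN.

Fact z2_mulA : associative z2_mul.
Proof.
move=> x y z; apply: z2_eq => k; rewrite !z2seq_of.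
by rewrite modzMml modzMmr mulrA.
Qed.

Fact z2_mulC : commutative z2_mul.
Proof. by move=> x y; apply: z2_eq => k; rewrite !z2seq_of mulrC. Qed.

Fact z2_mul1 : left_id z2_one z2_mul.
Proof.
by move=> x; apply: z2_eq => k; rewrite !z2seq_of modzMml mul1r z2_modE.
Qed.

Fact z2_mulDl : left_distributive z2_mul z2_add.
Proof.
move=> x y z; apply: z2_eq => k; rewrite !z2seq_of.
by rewrite modzMml modzDm mulrDl.
Qed.

Fact z2_one_neq0 : z2_one != z2_zero.
Proof.
apply/eqP => /(congr1 (fun x => z2seq x 1)); rewrite !z2seq_of /pow2.
by rewrite expr1 modz_small.
Qed.

HB.instance Definition _ :=
  GRing.Zmodule_isComNzRing.Build Z2 z2_mulA z2_mulC z2_mul1 z2_mulDl z2_one_neq0.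

(* The lattice M = Z a_1 + Z b_1, realised as row vectors 'rV[int]_2 with    *)
(* a_1 = (1,0), b_1 = (0,1), and M (x) Z_2 = 'rV[Z2]_2.  Matrices act on the *)
(* right of row vectors: v |-> v *m sigma.                                   *)

Definition a1 : 'rV[int]_2 := \row_(j < 2) (if j == 0 then 1 else 0).
Definition b1 : 'rV[int]_2 := \row_(j < 2) (if j == 0 then 0 else 1).

Definition pairing (v w : 'rV[Z2]_2) : Z2 := v 0 1 * w 0 0 - v 0 0 * w 0 1.

Definition toZ2 (c : 'rV[int]_2) : 'rV[Z2]_2 := map_mx (fun z : int => z%:~R) c.

Definition Sp (s : 'M[Z2]_2) : Prop :=
  (exists t : 'M[Z2]_2, s * t = 1 /\ t * s = 1) /\ forall v w : 'rV[Z2]_2, pairing (v *m s) (w *m s) = pairing v w.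

Definition congr_mx (N : nat) (A B : 'M[Z2]_2) : Prop :=
  exists t : 'M[Z2]_2, A = B + N%:R *: t.

Definition Gamma (N : nat) (s : 'M[Z2]_2) : Prop := Sp s /\ congr_mx N s 1.

Definition transvection (c : 'rV[int]_2) : 'M[Z2]_2 :=
  lin1_mx (fun v : 'rV[Z2]_2 => v + pairing v (toZ2 c) *: toZ2 c).

Definition is_subgroup (P : 'M[Z2]_2 -> Prop) : Prop :=
  [/\ forall s, P s -> Sp s,
      P 1,
      forall s t, P s -> P t -> P (s * t)
    & forall s t, P s -> s * t = 1 -> P t].

(* closedness for the 2-adic (congruence) topology on matrices over Z_2,
   whose basic neighbourhoods of s are {t | t = s mod 2^k}, k : nat *)
Definition is_closed (P : 'M[Z2]_2 -> Prop) : Prop :=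
  forall s, (forall k : nat, exists2 t, P t & congr_mx (2 ^ k) s t) -> P s.

Definition top_generated (S : 'M[Z2]_2 -> Prop) (s : 'M[Z2]_2) : Prop :=
  forall P, is_subgroup P -> is_closed P -> (forall t, S t -> P t) -> P s.

(* Gamma(2^n) is a closed subgroup containing the T_{c_i}^(2^n), so it
   contains the closed subgroup they generate.  Conversely, T_c = 1 + N_c with
   N_c^2 = 0, so T_c^(2^m) = 1 + 2^m N_c.  For m >= 1, multiplying elements of
   the form 1 + 2^m X adds the X modulo 2, and 1 + 2^m X has determinant 1
   only if X has even trace.  Modulo 2 the N_{c_i} are [[1,1],[1,1]],
   [[0,1],[0,0]] and [[0,0],[1,0]], which span the matrices of even trace.
   Hence an element of Gamma(2^n) approximated modulo 2^m by the generated
   subgroup is also approximated modulo 2^(m+1), and closedness concludes. *)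

From HB Require Import structures.
From mathcomp Require Import all_boot all_order all_algebra.
From mathcomp Require Import ring.
Set Implicit Arguments.
Unset Strict Implicit.
Unset Printing Implicit Defensive.
Import Order.TTheory GRing.Theory Num.Theory.
Local Open Scope ring_scope.

Lemma z2seqD (x y : Z2) k : z2seq (x + y) k = ((z2seq x k + z2seq y k) %% pow2 k)%Z.
Proof. by []. Qed.

Lemma z2seqM (x y : Z2) k : z2seq (x * y) k = ((z2seq x k * z2seq y k) %% pow2 k)%Z.
Proof. by []. Qed.

Lemma z2seq_nat (a : nat) k : z2seq a%:R k = (a %% pow2 k)%Z.
Proof.
elim: a => [|a IHa]; first by rewrite /= !mod0z.
by rewrite mulrS z2seqD IHa modzDm.
Qed.

Lemma z2_eq0_pow2 (x : Z2) : (forall k, exists y, x = 2 ^+ k * y) -> x = 0.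
Proof.
move=> x_div; apply: z2_eq => k; have [y ->] := x_div k.
have pow2E : pow2 k = (2 ^ k)%N by rewrite /pow2 -natrX natz.
by rewrite z2seqM -natrX z2seq_nat -pow2E modzz mul0r mod0z /= mod0z.
Qed.

Lemma lreg2 : GRing.lreg (2 : Z2).
Proof.
suff mul2_eq0 (z : Z2) : 2 * z = 0 -> z = 0.
  move=> a b /eqP; rewrite -subr_eq0 -mulrBr => /eqP/mul2_eq0/eqP.
  by rewrite subr_eq0 => /eqP.
move=> z2_0; apply: z2_eq => k; rewrite /= mod0z.
have : (pow2 k.+1 %| 2 * z2seq z k.+1)%Z.
  apply/dvdz_mod0P; have := congr1 (z2seq ^~ k.+1) z2_0.
  by rewrite z2seqM z2seq_nat modzMml /= mod0z.
by rewrite /pow2 exprS dvdz_mul2l // => /dvdz_mod0P; rewrite z2_compat.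
Qed.

Fact z2_half_compat (x : Z2) k :
  ((z2seq x k.+2 %/ 2)%Z = (z2seq x k.+1 %/ 2)%Z %[mod pow2 k])%Z.
Proof.
rewrite [z2seq x k.+2](divz_eq _ (pow2 k.+1)) z2_compat.
by rewrite /pow2 exprSr mulrA divzMDl // modzMDl.
Qed.

Definition z2_half (x : Z2) : Z2 := z2_of (z2_half_compat x).

Lemma z2_parity (x : Z2) : exists (e : bool) (y : Z2), x = e%:R + 2 * y.
Proof.
have bit_lt2 : 0 <= z2seq x 1 < 2.
  by rewrite -(z2_modE x 1) /pow2 expr1 modz_ge0 ?ltz_pmod.
have bitE k : (z2seq x k.+1 %% 2)%Z = z2seq x 1.
  have mod2_pow2 (m : int) j : ((m %% pow2 j.+1)%Z %% 2)%Z = (m %% 2)%Z.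
    by rewrite {2}(divz_eq m (pow2 j.+1)) /pow2 exprSr mulrA modzMDl.
  elim: k => [|k IHk]; first by rewrite -[2]expr1 z2_modE.
  by rewrite -(mod2_pow2 _ k) z2_compat.
exists (z2seq x 1 == 1), (z2_half x); apply: z2_eq => k.
rewrite z2seqD z2seqM !z2seq_nat /= modzMml modzMmr modzDm -[in LHS]z2_compat.
congr (_ %% _)%Z; rewrite [LHS](divz_eq _ 2) bitE addrC mulrC.
by case/andP: bit_lt2; case: (z2seq x 1) => [[|[|]]|] //.
Qed.

Lemma ord2P (i : 'I_2) : i = 0 \/ i = 1.
Proof. by case: i => [[|[|]]] //= H; [left|right]; apply: val_inj. Qed.

Lemma lift0_ord2 : lift ord0 ord0 = 1 :> 'I_2.
Proof. exact: val_inj. Qed.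

Section Matrix2.
Variable R : comNzRingType.

Definition mx2_def (a b c d : R) : 'M[R]_2 :=
  \matrix_(i < 2, j < 2) if i == 0 then (if j == 0 then a else b) else (if j == 0 then c else d).
Fact mx2_key : unit. Proof. by []. Qed.
Definition mx2 := locked_with mx2_key mx2_def.

Lemma mx2P (A B : 'M[R]_2) :
  A 0 0 = B 0 0 -> A 0 1 = B 0 1 -> A 1 0 = B 1 0 -> A 1 1 = B 1 1 -> A = B.
Proof. by move=> *; apply/matrixP => i j; case: (ord2P i) => ->; case: (ord2P j) => ->. Qed.

Lemma mx2E a b c d :
  (mx2 a b c d 0 0 = a) * (mx2 a b c d 0 1 = b) * (mx2 a b c d 1 0 = c) * (mx2 a b c d 1 1 = d).
Proof. by rewrite locked_withE !mxE. Qed.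

Lemma mx2_eta (A : 'M[R]_2) : A = mx2 (A 0 0) (A 0 1) (A 1 0) (A 1 1).
Proof. by apply: mx2P; rewrite !mx2E. Qed.

Lemma mx2_one : (1 : 'M[R]_2) = mx2 1 0 0 1.
Proof. by apply: mx2P; rewrite !mx2E !mxE. Qed.

Lemma mx2_add a b c d a' b' c' d' :
  mx2 a b c d + mx2 a' b' c' d' = mx2 (a + a') (b + b') (c + c') (d + d').
Proof. by apply: mx2P; rewrite !mxE !mx2E. Qed.

Lemma mx2_scale k a b c d : k *: mx2 a b c d = mx2 (k * a) (k * b) (k * c) (k * d).
Proof. by apply: mx2P; rewrite !mxE !mx2E. Qed.

Lemma mx2_muln a b c d k : mx2 a b c d *+ k = mx2 (a *+ k) (b *+ k) (c *+ k) (d *+ k).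
Proof. by apply: mx2P; rewrite !mulmxnE !mx2E. Qed.

Lemma mx2_mul a b c d a' b' c' d' : mx2 a b c d * mx2 a' b' c' d' =
  mx2 (a * a' + b * c') (a * b' + b * d') (c * a' + d * c') (c * b' + d * d').
Proof.
by apply: mx2P; rewrite !mxE !big_ord_recl !big_ord0 !addr0 lift0_ord2 !mx2E.
Qed.

Lemma det_mx2 a b c d : \det (mx2 a b c d) = a * d - b * c.
Proof.
rewrite (expand_det_row _ 0) !big_ord_recl big_ord0 addr0 /cofactor !det_mx11 !mxE /=.
have -> : lift 0 0 = 1 :> 'I_2 by exact: val_inj.
have -> : lift 1 0 = 0 :> 'I_2 by exact: val_inj.
rewrite (_ : ord0 = 0 :> 'I_2) // !mx2E /= expr0 expr1; ring.
Qed.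

Lemma mulmx_row2E (v : 'rV[R]_2) (s : 'M[R]_2) j :
  (v *m s) 0 j = v 0 0 * s 0 j + v 0 1 * s 1 j.
Proof. by rewrite !mxE !big_ord_recl big_ord0 addr0 lift0_ord2. Qed.

Lemma detDZ_mod (A B : 'M[R]_2) c : exists z, \det (A + c *: B) = \det A + c * z.
Proof.
exists (A 0 0 * B 1 1 + B 0 0 * A 1 1 + c * B 0 0 * B 1 1
        - A 0 1 * B 1 0 - B 0 1 * A 1 0 - c * B 0 1 * B 1 0).
rewrite [A]mx2_eta [B]mx2_eta mx2_scale mx2_add !det_mx2 !mx2E; ring.
Qed.

End Matrix2.

Ltac mx2_norm :=
  rewrite ?mx2_one; repeat progress rewrite ?mx2_scale ?mx2_add ?mx2_mul ?mx2_muln.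

Lemma expr1D_sqr0 (R : pzRingType) (N : R) k : N * N = 0 -> (1 + N) ^+ k = 1 + N *+ k.
Proof.
move=> N2_0; elim: k => [|k IHk]; first by rewrite expr0 mulr0n addr0.
by rewrite exprS IHk mulrDl mul1r mulrDr mulr1 mulrnAr N2_0 mul0rn addr0 mulrSr addrA.
Qed.

Lemma congr_mx_refl N A : congr_mx N A A.
Proof. by exists 0; rewrite scaler0 addr0. Qed.

Lemma congr_mx_sym N A B : congr_mx N A B -> congr_mx N B A.
Proof. by case=> t ->; exists (- t); rewrite scalerN addrK. Qed.

Lemma congr_mx_trans N A B C : congr_mx N A B -> congr_mx N B C -> congr_mx N A C.
Proof. by case=> t -> [u ->]; exists (u + t); rewrite scalerDr addrA. Qed.

Lemma congr_mxD N A B C D :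
  congr_mx N A B -> congr_mx N C D -> congr_mx N (A + C) (B + D).
Proof. by case=> t -> [u ->]; exists (t + u); rewrite scalerDr addrACA. Qed.

Lemma congr_mxMn N A B k : congr_mx N A B -> congr_mx N (A *+ k) (B *+ k).
Proof. by case=> t ->; exists (t *+ k); rewrite mulrnDl scalerMnr. Qed.

Lemma congr_mxM N A B C D :
  congr_mx N A B -> congr_mx N C D -> congr_mx N (A * C) (B * D).
Proof.
case=> t -> [u ->]; exists (B * u + t * D + N%:R *: (t * u)).
by rewrite mulrDl !mulrDr -!scalerAl -!scalerAr !scalerDr !addrA.
Qed.

Lemma congr_mx_dvd M N A B : (M %| N)%N -> congr_mx N A B -> congr_mx M A B.
Proof.
by case/dvdnP=> d -> [t ->]; exists (d%:R *: t); rewrite scalerA -natrM mulnC.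
Qed.

Lemma pairing_mulmx v w s : pairing (v *m s) (w *m s) = \det s * pairing v w.
Proof. by rewrite [s]mx2_eta det_mx2 /pairing !mulmx_row2E !mx2E; ring. Qed.

Lemma Sp_det s : Sp s <-> \det s = 1.
Proof.
split=> [[_ /(_ (delta_mx 0 0) (delta_mx 0 1))] | det_s].
  by rewrite pairing_mulmx /pairing !mxE /= mul0r mulr1 sub0r mulrN1 => /oppr_inj.
split=> [|v w]; last by rewrite pairing_mulmx det_s mul1r.
by exists (\adj s); split; [move: (mul_mx_adj s) | move: (mul_adj_mx s)]; rewrite det_s.
Qed.

Lemma Gamma_subgroup N : is_subgroup (Gamma N).
Proof.
split=> [s [] // | | s t [/Sp_det det_s s_1] [/Sp_det det_t t_1] | s t].
- by split; [rewrite Sp_det; exact: det1 | exact: congr_mx_refl].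
- split; first by rewrite Sp_det detM det_s det_t mulr1.
  by rewrite -[1]mulr1; exact: congr_mxM.
case=> /Sp_det det_s [a s_eq] st_1; split.
  by rewrite Sp_det; move/(congr1 determinant): st_1; rewrite detM det_s mul1r det1.
exists (- (a * t)); rewrite scalerN -st_1 s_eq mulrDl mul1r -scalerAl.
by rewrite addrK.
Qed.

Lemma Gamma_closed n : is_closed (Gamma (2 ^ n)).
Proof.
move=> s near_s; split; last first.
  by have [t [_ t_1] s_t] := near_s n; exact: congr_mx_trans s_t t_1.
rewrite Sp_det; apply/eqP; rewrite -subr_eq0; apply/eqP; apply: z2_eq0_pow2 => k.
have [t [/Sp_det det_t _] [u ->]] := near_s k.
by have [z ->] := detDZ_mod t u (2 ^ k)%N%:R; exists z; rewrite det_t addrC addKr natrX.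
Qed.

Definition transvection_nil (R : comNzRingType) (p q : R) : 'M[R]_2 :=
  mx2 (- (q * p)) (- (q * q)) (p * p) (p * q).

Lemma transvection_nil_sqr (R : comNzRingType) (p q : R) :
  transvection_nil p q * transvection_nil p q = 0.
Proof.
by rewrite mx2_mul; apply: mx2P; rewrite !mx2E !mxE; ring.
Qed.

Lemma transvectionE c :
  transvection c = 1 + transvection_nil (toZ2 c 0 0) (toZ2 c 0 1).
Proof.
by apply: mx2P; rewrite !mxE /transvection_nil !mx2E /pairing !mxE /=; ring.
Qed.

Lemma Gamma_transvection_expr n c : Gamma (2 ^ n) (transvection c ^+ (2 ^ n)).
Proof.
rewrite transvectionE expr1D_sqr0 ?transvection_nil_sqr //; split.
  by rewrite Sp_det /transvection_nil; mx2_norm; rewrite det_mx2; ring.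
by exists (transvection_nil (toZ2 c 0 0) (toZ2 c 0 1)); rewrite scaler_nat addrC.
Qed.

Lemma subgroup_expr P g k : is_subgroup P -> P g -> P (g ^+ k).
Proof.
case=> _ P1 P_mul _ Pg; elim: k => [|k IHk]; first by rewrite expr0.
by rewrite exprS; apply: P_mul.
Qed.

Lemma congr_mx_1Z M N A B :
  congr_mx M A B -> congr_mx (N * M) (1 + N%:R *: A) (1 + N%:R *: B).
Proof. by case=> t ->; exists t; rewrite scalerDr scalerA -natrM addrA. Qed.

Lemma level_mul m (A B : 'M[Z2]_2) : (0 < m)%N ->
  congr_mx (2 ^ m.+1) ((1 + (2 ^ m)%N%:R *: A) * (1 + (2 ^ m)%N%:R *: B))
                      (1 + (2 ^ m)%N%:R *: (A + B)).
Proof.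
move=> m_gt0; exists ((2 ^ m.-1)%N%:R *: (A * B)).
rewrite [in RHS]scalerA -natrM -expnD addSn -addnS prednK // expnD natrM -scalerA.
rewrite mulrDl !mulrDr !mul1r !mulr1 -scalerAl -scalerAr scalerDr !addrA.
by rewrite (addrAC 1).
Qed.

Lemma trace_even_of_det m (X : 'M[Z2]_2) : (0 < m)%N ->
  \det (1 + (2 ^ m)%N%:R *: X) = 1 -> exists z, X 0 0 + X 1 1 = 2 * z.
Proof.
move=> m_gt0 det_1; exists (- ((2 ^ m.-1)%N%:R * \det X)).
have key : (2 ^ m)%N%:R * (X 0 0 + X 1 1 + (2 ^ m)%N%:R * \det X)
           = \det (1 + (2 ^ m)%N%:R *: X) - 1.
  by rewrite [X]mx2_eta; mx2_norm; rewrite !det_mx2 !mx2E; ring.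
have tr_eq0 : X 0 0 + X 1 1 + (2 ^ m)%N%:R * \det X = 0.
  by apply: (lregX (n := m) lreg2); rewrite mulr0 -natrX key det_1 subrr.
have -> : X 0 0 + X 1 1 = X 0 0 + X 1 1 + (2 ^ m)%N%:R * \det X - (2 ^ m)%N%:R * \det X.
  by rewrite addrK.
by rewrite tr_eq0 -(prednK m_gt0) expnS natrM; ring.
Qed.

Lemma transvection_nil_congr2 (e f r s : Z2) :
  congr_mx 2 (transvection_nil (e + 2 * r) (f + 2 * s)) (transvection_nil e f).
Proof.
exists (mx2 (- (f * r + s * e + 2 * s * r)) (- (2 * f * s + 2 * s * s))
            (2 * e * r + 2 * r * r) (f * r + s * e + 2 * s * r)).
by rewrite /transvection_nil; mx2_norm; congr mx2; ring.
Qed.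

Lemma trace_even_span_std (X : 'M[Z2]_2) z : X 0 0 + X 1 1 = 2 * z ->
  exists k1 k2 k3 : nat, congr_mx 2 X
    (transvection_nil 1 1 *+ k1 + transvection_nil 0 1 *+ k2 + transvection_nil 1 0 *+ k3).
Proof.
move=> tr_X; have [e0 [y0 X00]] := z2_parity (X 0 0).
have [e1 [y1 X01]] := z2_parity (X 0 1); have [e2 [y2 X10]] := z2_parity (X 1 0).
have X11 : X 1 1 = 2 * z - X 0 0 by rewrite -tr_X addrC addKr.
exists e0, (e0 + e1)%N, (e0 + e2)%N.
exists (mx2 (e0%:R + y0) (e0%:R + e1%:R + y1) (y2 - e0%:R) (z - e0%:R - y0)).
rewrite [X]mx2_eta X11 X00 X01 X10 /transvection_nil; mx2_norm; congr mx2; ring.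
Qed.

Section Approximation.

Variables (P : 'M[Z2]_2 -> Prop) (n : nat) (p1 q1 p2 q2 p3 q3 : Z2).
Hypotheses (P_subgroup : is_subgroup P) (n_gt0 : (0 < n)%N).
Hypotheses (p1_odd : exists r, p1 = 1 + 2 * r) (q1_odd : exists r, q1 = 1 + 2 * r).
Hypotheses (p2_even : exists r, p2 = 0 + 2 * r) (q2_odd : exists r, q2 = 1 + 2 * r).
Hypotheses (p3_odd : exists r, p3 = 1 + 2 * r) (q3_even : exists r, q3 = 0 + 2 * r).
Hypotheses (P_gen1 : P ((1 + transvection_nil p1 q1) ^+ (2 ^ n)))
           (P_gen2 : P ((1 + transvection_nil p2 q2) ^+ (2 ^ n)))
           (P_gen3 : P ((1 + transvection_nil p3 q3) ^+ (2 ^ n))).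

Lemma trace_even_span (X : 'M[Z2]_2) z : X 0 0 + X 1 1 = 2 * z ->
  exists k1 k2 k3 : nat, congr_mx 2 X
    (transvection_nil p1 q1 *+ k1 + transvection_nil p2 q2 *+ k2 + transvection_nil p3 q3 *+ k3).
Proof.
move=> /trace_even_span_std [k1 [k2 [k3 X_N]]]; exists k1, k2, k3.
apply: congr_mx_trans X_N (congr_mx_sym _).
apply: congr_mxD; [apply: congr_mxD|]; apply: congr_mxMn.
- by case: p1_odd q1_odd => [r ->] [s ->]; exact: transvection_nil_congr2.
- by case: p2_even q2_odd => [r ->] [s ->]; exact: transvection_nil_congr2.
- by case: p3_odd q3_even => [r ->] [s ->]; exact: transvection_nil_congr2.
Qed.

Lemma P_level_transvection m p q k : (n <= m)%N ->
  P ((1 + transvection_nil p q) ^+ (2 ^ n)) ->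
  P (1 + (2 ^ m)%N%:R *: (transvection_nil p q *+ k)).
Proof.
move=> le_nm /(subgroup_expr (2 ^ (m - n) * k) P_subgroup).
rewrite -exprM mulnA -expnD subnKC // expr1D_sqr0 ?transvection_nil_sqr //.
by rewrite mulnC mulrnA scaler_nat.
Qed.

Lemma level_lift m (X : 'M[Z2]_2) z : (n <= m)%N -> X 0 0 + X 1 1 = 2 * z ->
  exists2 h, P h & congr_mx (2 ^ m.+1) h (1 + (2 ^ m)%N%:R *: X).
Proof.
move=> le_nm /trace_even_span [k1 [k2 [k3 X_N]]].
have [_ _ P_mul _] := P_subgroup.
have m_gt0 : (0 < m)%N := leq_trans n_gt0 le_nm.
pose g (p q : Z2) k := 1 + (2 ^ m)%N%:R *: (transvection_nil p q *+ k).
exists (g p1 q1 k1 * g p2 q2 k2 * g p3 q3 k3).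
  by apply: (P_mul); [apply: (P_mul)|]; apply: P_level_transvection.
apply: congr_mx_trans (congr_mxM (level_mul _ _ m_gt0) (congr_mx_refl _ (g p3 q3 k3))) _.
apply: congr_mx_trans (level_mul _ _ m_gt0) _.
by rewrite expnSr; apply: congr_mx_1Z; apply: congr_mx_sym.
Qed.

Lemma approx_step m s t : (n <= m)%N -> Sp s -> P t -> congr_mx (2 ^ m) s t ->
  exists2 t', P t' & congr_mx (2 ^ m.+1) s t'.
Proof.
move=> le_nm /Sp_det det_s Pt [u s_eq].
have [Sp_P _ P_mul _] := P_subgroup.
have [[t' [tt' t't]] _] := Sp_P t Pt.
have det_t : \det t = 1 by apply/Sp_det/Sp_P.
have det_t' : \det t' = 1 by move: (congr1 determinant tt'); rewrite detM det_t mul1r det1.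
have t's : t' * s = 1 + (2 ^ m)%N%:R *: (t' * u) by rewrite s_eq mulrDr t't scalerAr.
have [z tr_X] : exists z, (t' * u) 0 0 + (t' * u) 1 1 = 2 * z.
  by apply: (trace_even_of_det (leq_trans n_gt0 le_nm)); rewrite -t's detM det_t' det_s mulr1.
have [h Ph h_lev] := level_lift le_nm tr_X.
exists (t * h); first exact: P_mul.
apply: congr_mx_sym; rewrite -[s]mul1r -tt' -mulrA t's.
exact: congr_mxM (congr_mx_refl _ _) h_lev.
Qed.

Lemma approx s j : Gamma (2 ^ n) s -> exists2 t, P t & congr_mx (2 ^ (n + j)) s t.
Proof.
case=> Sp_s s_1; elim: j => [|j [t Pt s_t]].
  by have [_ P1 _ _] := P_subgroup; exists 1; rewrite ?addn0.
by rewrite addnS; apply: approx_step Pt s_t; rewrite ?leq_addr.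
Qed.

End Approximation.

Lemma toZ2_addMn2 (c m : 'rV[int]_2) j :
  toZ2 (c + m *+ 2) 0 j = (c 0 j)%:~R + 2 * (m 0 j)%:~R.
Proof. by rewrite !mxE !intrD mulr_natl mulr2n. Qed.

Theorem proposition3p3 (c1 c2 c3 : 'rV[int]_2) (n : nat) :
  (exists m : 'rV[int]_2, c1 = a1 + b1 + m *+ 2) ->
  (exists m : 'rV[int]_2, c2 = b1 + m *+ 2) ->
  (exists m : 'rV[int]_2, c3 = a1 + m *+ 2) ->
  (1 <= n)%N ->
  forall s : 'M[Z2]_2,
    top_generated
      (fun t => t = transvection c1 ^+ (2 ^ n) \/
                t = transvection c2 ^+ (2 ^ n) \/
                t = transvection c3 ^+ (2 ^ n)) s
    <-> Gamma (2 ^ n) s.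
Proof.
move=> [m1 ->] [m2 ->] [m3 ->] n_gt0 s; split=> [gen_s | Gamma_s P P_sub P_closed P_gen].
  apply: gen_s; [exact: Gamma_subgroup | exact: Gamma_closed |].
  by move=> t [->|[->|->]]; exact: Gamma_transvection_expr.
apply: P_closed => k.
have G1 := P_gen _ (or_introl erefl).
have G2 := P_gen _ (or_intror (or_introl erefl)).
have G3 := P_gen _ (or_intror (or_intror erefl)).
rewrite !transvectionE in G1 G2 G3.
have [|||||| t Pt s_t] := approx P_sub n_gt0 _ _ _ _ _ _ G1 G2 G3 k Gamma_s.
1-6: by rewrite toZ2_addMn2 !mxE; eexists.
by exists t => //; apply: congr_mx_dvd s_t; rewrite dvdn_exp2l ?leq_addl.
Qed.
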